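(* Let $0<\theta_m<\theta_M$, $\Theta=(\theta_m,\theta_M)$, $\alpha>0$, $r>0$. Suppose $v(x,t)$ is a smooth function satisfying, at some point $(x_0,t_0)$, $v_t(x_0,t_0)-H(\partial_xv(x_0,t_0))=-a$ for some $a>0$. Set $\lambda=\partial_xv(x_0,t_0)$, let $Q(\theta)>0$ be the normalized eigenfunction associated with $H(\lambda)$ (see context), and define $v^\varepsilon(x,\theta,t)=v(x,t)+\varepsilon\ln Q(\theta)$. Then there exist positive constants $s,\varepsilon_1$ such that for all $(x,t)\in B_s(x_0,t_0)$, all $\theta\in\Theta$ and all $0<\varepsilon\le\varepsilon_1$, $$v^\varepsilon_t-\varepsilon\theta v^\varepsilon_{xx}-\theta(v^\varepsilon_x)^2-\frac{\alpha}{\varepsilon}v^\varepsilon_{\theta\theta}-\frac{\alpha}{\varepsilon^2}(v^\varepsilon_\theta)^2-r\le-\frac a2,$$ where all terms are evaluated at $(x,\theta,t)$.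
   Context: $H:\mathbb{R}\to\mathbb{R}$ and $Q$: for each $\lambda\in\mathbb{R}$, $H(\lambda)$ is the unique real number for which there exists $Q=Q(\cdot,\lambda)>0$ on $\bar\Theta$ with $\int_\Theta Q\,d\theta=1$, $(-H(\lambda)+\theta\lambda^2+r)Q+\alpha Q''=0$ on $\Theta$ and $Q'(\theta_m)=Q'(\theta_M)=0$ (and $Q$ is then unique). *)

From Stdlib Require Import Reals.
From Coquelicot Require Import Coquelicot.
Open Scope R_scope.

Definition pderiv (n m : nat) (v : R -> R -> R) : R -> R -> R :=
  fun x t => Derive_n (fun x' => Derive_n (fun t' => v x' t') m t) n x.

Definition smooth2 (v : R -> R -> R) : Prop :=
  forall (n m : nat) (x t : R),
    ex_derive (fun x' => pderiv n m v x' t) x /\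
    ex_derive (fun t' => pderiv n m v x t') t /\
    continuous (fun p : R * R => pderiv n m v (fst p) (snd p)) (x, t).

(* (h, q) is the principal eigenpair of the context for parameter lam:
   q > 0 on [thm, thM], q continuous on [thm, thM], int_Theta q = 1,
   (-h + theta lam^2 + r) q + alpha q'' = 0 on Theta = (thm, thM),
   q'(thm) = q'(thM) = 0 (one-sided derivatives at the endpoints). *)
Definition eigenpair (alpha r thm thM lam h : R) (q : R -> R) : Prop :=
  (forall th, thm <= th <= thM -> 0 < q th) /\
  (forall th, thm <= th <= thM ->
     filterlim q (within (fun y => thm <= y <= thM) (locally th)) (locally (q th))) /\
  is_RInt q thm thM 1 /\
  (forall th, thm < th < thM ->
     ex_derive q th /\ ex_derive (Derive q) th /\
     (- h + th * lam ^ 2 + r) * q th + alpha * Derive (Derive q) th = 0) /\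
  filterlim (fun e => (q (thm + e) - q thm) / e) (at_right 0) (locally 0) /\
  filterlim (fun e => (q (thM + e) - q thM) / e) (at_left 0) (locally 0).

From Stdlib Require Import Reals Lra Psatz.
From Coquelicot Require Import Coquelicot.
Open Scope R_scope.

(* The corrector [eps ln Q] is chosen so that the theta-terms of the operator cancel
   exactly against the eigenvalue equation for [Q]: what remains is
   [v_t - eps theta v_xx - theta v_x^2 + theta lam^2 - H lam], which equals [-a] at
   [(x0, t0)] when [eps = 0].  Continuity of [v_t] and [v_x] near [(x0, t0)], together
   with a bound on [v_xx] that is killed by a small [eps], keeps it below [-a/2]. *)

Lemma Derive_plus_const (f : R -> R) (c x : R) :
  ex_derive f x -> Derive (fun y => f y + c) x = Derive f x.
Proof.
  intros Hf; rewrite Derive_plus, Derive_const; [ring | exact Hf |].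
  apply (ex_derive_const (K := R_AbsRing) (V := R_NormedModule)).
Qed.

Lemma is_derive_scal_ln (q : R -> R) (c eps y : R) :
  0 < q y -> ex_derive q y ->
  is_derive (fun z => c + eps * ln (q z)) y (eps * (Derive q y / q y)).
Proof.
  intros Hq Hd.
  replace (eps * (Derive q y / q y)) with (plus zero (eps * (Derive q y * / q y)))
    by (unfold plus, zero; simpl; unfold Rdiv; ring).
  apply (is_derive_plus (fun _ => c)).
  - apply (is_derive_const (K := R_AbsRing) (V := R_NormedModule)).
  - apply is_derive_scal, (is_derive_comp ln q y).
    + now apply is_derive_ln.
    + now apply Derive_correct.
Qed.

Lemma is_derive2_scal_ln (q : R -> R) (c eps lo hi y : R) :
  lo < y < hi -> (forall z, lo < z < hi -> 0 < q z /\ ex_derive q z) ->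
  ex_derive (Derive q) y ->
  is_derive (fun z => Derive (fun w => c + eps * ln (q w)) z) y
    (eps * ((Derive (Derive q) y * q y - Derive q y * Derive q y) / q y ^ 2)).
Proof.
  intros Hy Hq Hq2.
  destruct (Hq y Hy) as [Hqy Hq1].
  apply (is_derive_ext_loc (fun z => eps * (Derive q z / q z))).
  - assert (Hm : 0 < Rmin (y - lo) (hi - y)) by (apply Rmin_glb_lt; lra).
    exists (mkposreal _ Hm); intros z Hz; change (Rabs (z - y) < Rmin (y - lo) (hi - y)) in Hz.
    pose proof (Rmin_l (y - lo) (hi - y)); pose proof (Rmin_r (y - lo) (hi - y)).
    apply Rabs_def2 in Hz.
    assert (Hz' : lo < z < hi) by lra; destruct (Hq z Hz').
    symmetry; apply is_derive_unique, is_derive_scal_ln; assumption.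
  - apply is_derive_scal, is_derive_div; try now apply Derive_correct.
    lra.
Qed.

(* The singular [1/eps] parts of [(eps ln q)''] and [((eps ln q)')^2] cancel. *)
Lemma scal_ln_theta_terms (alpha eps q0 q1 q2 : R) :
  q0 <> 0 -> eps <> 0 ->
  alpha / eps * (eps * ((q2 * q0 - q1 * q1) / q0 ^ 2))
  + alpha / eps ^ 2 * (eps * (q1 / q0)) ^ 2 = alpha * q2 / q0.
Proof. intros; field; auto. Qed.

Lemma eigenpair_operator_eq (alpha r thm thM lam h : R) (q : R -> R)
  (v : R -> R -> R) (x th t eps : R) :
  eigenpair alpha r thm thM lam h q -> smooth2 v -> thm < th < thM -> eps <> 0 ->
  Derive (fun t' => v x t' + eps * ln (q th)) t
  - eps * th * Derive (fun x' => Derive (fun x'' => v x'' t + eps * ln (q th)) x') x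
  - th * (Derive (fun x' => v x' t + eps * ln (q th)) x) ^ 2
  - alpha / eps * Derive (fun th' => Derive (fun th'' => v x t + eps * ln (q th'')) th') th
  - alpha / eps ^ 2 * (Derive (fun th' => v x t + eps * ln (q th')) th) ^ 2
  - r
  = Derive (fun t' => v x t') t
    - eps * th * Derive (fun x' => Derive (fun x'' => v x'' t) x') x
    - th * (Derive (fun x' => v x' t) x) ^ 2 + th * lam ^ 2 - h.
Proof.
  intros [Hpos [_ [_ [Hder _]]]] Hsm Hth Heps.
  assert (Hq : forall z, thm < z < thM -> 0 < q z /\ ex_derive q z)
    by (intros z Hz; split; [apply Hpos; lra | apply (Hder z Hz)]).
  destruct (Hder th Hth) as [Hq1 [Hq2 Heig]].
  assert (Hx : forall x', Derive (fun x'' => v x'' t + eps * ln (q th)) x'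
                         = Derive (fun x'' => v x'' t) x')
    by (intro x'; apply Derive_plus_const, (proj1 (Hsm 0%nat 0%nat x' t))).
  rewrite (Derive_ext (fun x' => Derive (fun x'' => v x'' t + eps * ln (q th)) x')
            (fun x' => Derive (fun x'' => v x'' t) x') x Hx), Hx.
  rewrite Derive_plus_const by apply (proj1 (proj2 (Hsm 0%nat 0%nat x t))).
  replace (Derive (fun th' => v x t + eps * ln (q th')) th)
    with (eps * (Derive q th / q th))
    by (symmetry; apply is_derive_unique, is_derive_scal_ln; [apply Hq | ]; assumption).
  replace (Derive (fun th' => Derive (fun th'' => v x t + eps * ln (q th'')) th') th)
    with (eps * ((Derive (Derive q) th * q th - Derive q th * Derive q th) / q th ^ 2))
    by (symmetry; apply is_derive_unique, (is_derive2_scal_ln q _ _ thm thM); assumption).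
  assert (Hq0 : q th <> 0) by (apply Rgt_not_eq, Hpos; lra).
  assert (Hkey : alpha / eps * (eps * ((Derive (Derive q) th * q th - Derive q th * Derive q th) / q th ^ 2))
      + alpha / eps ^ 2 * (eps * (Derive q th / q th)) ^ 2 = h - th * lam ^ 2 - r).
  { rewrite scal_ln_theta_terms by assumption.
    apply (Rmult_eq_reg_r (q th)); [|exact Hq0].
    field_simplify; [lra | exact Hq0]. }
  assert (Ht : Derive (v x) t = Derive (fun t' => v x t') t) by reflexivity.
  lra.
Qed.

Lemma locally_disk (P : R * R -> Prop) (x0 t0 : R) :
  locally (x0, t0) P ->
  exists s, 0 < s /\ forall x t, (x - x0) ^ 2 + (t - t0) ^ 2 < s ^ 2 -> P (x, t).
Proof.
  intros [d Hd]; exists d; split; [apply cond_pos|].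
  intros x t Hxt; pose proof (cond_pos d).
  pose proof (pow2_ge_0 (x - x0)); pose proof (pow2_ge_0 (t - t0)).
  apply Hd; split; [change (Rabs (x - x0) < d) | change (Rabs (t - t0) < d)];
    apply Rabs_def1; nra.
Qed.

Lemma continuous_locally_lt (f : R * R -> R) (p : R * R) (e : R) :
  continuous f p -> 0 < e -> locally p (fun q => Rabs (f q - f p) < e).
Proof.
  intros Hc He.
  apply (Hc (fun y => Rabs (y - f p) < e)).
  exists (mkposreal e He); intros y Hy; exact Hy.
Qed.

Lemma sq_sub_sq_le (l w d : R) :
  Rabs (w - l) <= d -> d <= 1 -> l ^ 2 - w ^ 2 <= d * (2 * Rabs l + 1).
Proof.
  intros Hwl Hd.
  assert (Hsum : Rabs (l + w) <= 2 * Rabs l + 1).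
  { replace (l + w) with ((w - l) + 2 * l) by ring.
    eapply Rle_trans; [apply Rabs_triang|].
    rewrite Rabs_mult, (Rabs_right 2) by lra; lra. }
  replace (l ^ 2 - w ^ 2) with (- (w - l) * (l + w)) by ring.
  eapply Rle_trans; [apply Rle_abs|]; rewrite Rabs_mult, Rabs_Ropp.
  apply Rmult_le_compat; auto using Rabs_pos.
Qed.

Lemma Rabs_le_shift (u u0 : R) : Rabs (u - u0) < 1 -> Rabs u <= Rabs u0 + 1.
Proof.
  intros Hu; replace u with ((u - u0) + u0) by ring.
  eapply Rle_trans; [apply Rabs_triang|]; lra.
Qed.

Lemma reduced_operator_le (vt vx vxx : R * R -> R) (x0 t0 h a thM : R) :
  continuous vt (x0, t0) -> continuous vx (x0, t0) -> continuous vxx (x0, t0) ->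
  0 < a -> 0 < thM -> vt (x0, t0) - h = - a ->
  exists s eps1, 0 < s /\ 0 < eps1 /\
    forall x t th eps,
      (x - x0) ^ 2 + (t - t0) ^ 2 < s ^ 2 -> 0 < th <= thM -> 0 < eps <= eps1 ->
      vt (x, t) - eps * th * vxx (x, t) - th * vx (x, t) ^ 2
      + th * vx (x0, t0) ^ 2 - h <= - (a / 2).
Proof.
  intros Ct Cx Cxx Ha HthM Hvt0.
  set (lam := vx (x0, t0)); set (K := 2 * Rabs lam + 1).
  set (M := Rabs (vxx (x0, t0)) + 1); set (del := Rmin 1 (a / (8 * thM * K))).
  assert (HK : 0 < K) by (pose proof (Rabs_pos lam); unfold K; lra).
  assert (HM : 0 < M) by (pose proof (Rabs_pos (vxx (x0, t0))); unfold M; lra).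
  assert (Hdel : 0 < del).
  { apply Rmin_glb_lt; [lra|]; apply Rdiv_lt_0_compat; [lra|]; nra. }
  assert (HdelK : thM * (del * K) <= a / 8).
  { assert (del <= a / (8 * thM * K)) by apply Rmin_r.
    replace (a / 8) with (thM * (a / (8 * thM * K) * K)) by (field; lra).
    apply Rmult_le_compat_l; [lra|]; apply Rmult_le_compat_r; lra. }
  assert (Ha8 : 0 < a / 8) by lra.
  destruct (locally_disk _ x0 t0
    (filter_and _ _ (continuous_locally_lt _ _ _ Ct Ha8)
      (filter_and _ _ (continuous_locally_lt _ _ _ Cx Hdel)
                      (continuous_locally_lt _ _ _ Cxx Rlt_0_1))))
    as [s [Hs Hnear]].
  exists s, (a / (8 * thM * M)); split; [exact Hs|].
  split; [apply Rdiv_lt_0_compat; [lra|]; nra|].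
  intros x t th eps Hxt Hth Heps.
  destruct (Hnear x t Hxt) as [Dt [Dx Dxx]]; fold lam in Dx.
  apply Rabs_def2 in Dt.
  assert (Bxx : - (eps * th * vxx (x, t)) <= a / 8).
  { pose proof (Rabs_le_shift _ _ Dxx) as Hxx; fold M in Hxx.
    pose proof (Rle_abs (- vxx (x, t))) as Hn; rewrite Rabs_Ropp in Hn.
    assert (Heps1 : eps * th <= a / (8 * thM * M) * thM)
      by (apply Rmult_le_compat; lra).
    replace (a / 8) with (a / (8 * thM * M) * thM * M) by (field; lra).
    assert (0 <= eps * th) by nra. nra. }
  assert (Bx : th * (lam ^ 2 - vx (x, t) ^ 2) <= a / 8).
  { assert (Hsq : lam ^ 2 - vx (x, t) ^ 2 <= del * K)
      by (apply sq_sub_sq_le; [lra | apply Rmin_l]).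
    pose proof (Rmult_le_pos _ _ (Rlt_le _ _ Hdel) (Rlt_le _ _ HK)).
    destruct (Rle_dec 0 (lam ^ 2 - vx (x, t) ^ 2)); nra. }
  lra.
Qed.

Theorem lemma4p3 (thm thM alpha r : R) (H : R -> R) (Q : R -> R -> R)
  (v : R -> R -> R) (x0 t0 a : R) :
  0 < thm -> thm < thM -> 0 < alpha -> 0 < r ->
  (forall lam : R, eigenpair alpha r thm thM lam (H lam) (fun th => Q th lam)) ->
  smooth2 v -> 0 < a ->
  Derive (fun t => v x0 t) t0 - H (Derive (fun x => v x t0) x0) = - a ->
  let lam := Derive (fun x => v x t0) x0 in
  let veps := fun (eps x th t : R) => v x t + eps * ln (Q th lam) in
  exists s eps1 : R, 0 < s /\ 0 < eps1 /\
    forall x th t eps : R,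
      (x - x0) ^ 2 + (t - t0) ^ 2 < s ^ 2 -> thm < th < thM -> 0 < eps <= eps1 ->
      Derive (fun t' => veps eps x th t') t
      - eps * th * Derive (fun x' => Derive (fun x'' => veps eps x'' th t) x') x
      - th * (Derive (fun x' => veps eps x' th t) x) ^ 2
      - alpha / eps * Derive (fun th' => Derive (fun th'' => veps eps x th'' t) th') th
      - alpha / eps ^ 2 * (Derive (fun th' => veps eps x th' t) th) ^ 2
      - r <= - (a / 2).
Proof.
  intros Hthm HthM Hal Hr Heig Hsm Ha Hv0 lam veps.
  destruct (reduced_operator_le
    (fun p => Derive (fun t' => v (fst p) t') (snd p))
    (fun p => Derive (fun x' => v x' (snd p)) (fst p))
    (fun p => Derive (fun x' => Derive (fun x'' => v x'' (snd p)) x') (fst p))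
    x0 t0 (H lam) a thM
    (proj2 (proj2 (Hsm 0%nat 1%nat x0 t0)))
    (proj2 (proj2 (Hsm 1%nat 0%nat x0 t0)))
    (proj2 (proj2 (Hsm 2%nat 0%nat x0 t0))) Ha ltac:(lra) Hv0)
    as [s [eps1 [Hs [Heps1 Hbound]]]].
  exists s, eps1; split; [exact Hs | split; [exact Heps1 |]].
  intros x th t eps Hxt Hth Heps; unfold veps.
  rewrite (eigenpair_operator_eq alpha r thm thM lam (H lam) (fun th => Q th lam) v)
    by (auto || lra).
  apply (Hbound x t th eps Hxt ltac:(lra) Heps).
Qed.
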